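(* Let $i$ be an integer. If $H\in A_\mathfrak{p}$ satisfies $(1+\overline{\chi}^{\,i})H=0$ in $A_\mathfrak{p}$, then $i\|H\|$ is divisible by $p_\mathfrak{p}-1$.
   Context: $K$ is a number field with ring of integers $\mathcal{O}$, $\mathfrak{p}$ a maximal ideal of $\mathcal{O}$, $p_\mathfrak{p}$ the rational prime below $\mathfrak{p}$. $A_\mathfrak{p}$ is the Grothendieck ring of finite-dimensional continuous representations of $\mathrm{Gal}(\overline{\mathbb{Q}}/\mathbb{Q})$ with coefficients in $\mathcal{O}/\mathfrak{p}$ unramified outside $p_\mathfrak{p}$; $\mathcal{S}$ is the set of isomorphism classes of simple such representations, so every $H\in A_\mathfrak{p}$ is uniquely $H=\sum_{S\in\mathcal S}n_SS$, $n_S\in\mathbb{Z}$, and $\|H\|=\sum_S|n_S|\dim S$. $\overline{\chi}$ is the reduction mod $\mathfrak{p}$ of the $p_\mathfrak{p}$-adic cyclotomic character, viewed as a unit of $A_\mathfrak{p}$. *)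

From HB Require Import structures.
From mathcomp Require Import all_boot all_order all_algebra all_field.
From mathcomp Require Import boolp.
Set Implicit Arguments. Unset Strict Implicit. Unset Printing Implicit Defensive.
Import Order.TTheory GRing.Theory Num.Theory.
Local Open Scope ring_scope.

(* Gal(Qbar/Q) is modelled as the field automorphisms of algC
   (algC is an algebraic closure of Q; field automorphisms fix Q). *)
Definition is_gal (s : algC -> algC) : Prop :=
  [/\ forall x y, s (x + y) = s x + s y,
      forall x y, s (x * y) = s x * s y,
      s 1 = 1 & bijective s].

(* A finite-dimensional representation with coefficients in F:
   sigma acts on column vectors F^n through the matrix ract sigma. *)
Record rep (F : fieldType) := Rep { rdim : nat; ract : (algC -> algC) -> 'M[F]_rdim }.

Definition rep_hom (F : fieldType) (R : rep F) : Prop :=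
  ract R id = 1%:M /\
  forall s t, is_gal s -> is_gal t -> ract R (s \o t) = ract R s *m ract R t.

(* continuity for the Krull topology (discrete topology on the finite target):
   the kernel contains Gal(Qbar/Q(xs)) for a finite set xs of algebraic numbers *)
Definition rep_continuous (F : fieldType) (R : rep F) : Prop :=
  exists xs : seq algC, forall s, is_gal s -> (forall x, x \in xs -> s x = x) ->
    ract R s = 1%:M.

Definition Aint_ideal (P : algC -> Prop) : Prop :=
  [/\ forall x, P x -> x \in Aint, P 0,
      forall x y, P x -> P y -> P (x + y) &
      forall a x, a \in Aint -> P x -> P (a * x)].

Definition Aint_maximal (P : algC -> Prop) : Prop :=
  [/\ Aint_ideal P, ~ P 1 &
      forall J, Aint_ideal J -> (forall x, P x -> J x) -> J 1 \/ (forall x, J x -> P x)].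

Definition inertia (P : algC -> Prop) (s : algC -> algC) : Prop :=
  is_gal s /\ forall x, x \in Aint -> P (s x - x).

Definition rep_unram_outside (F : fieldType) (p : nat) (R : rep F) : Prop :=
  forall (l : nat) (P : algC -> Prop), prime l -> l != p ->
    Aint_maximal P -> P (l%:R) -> forall s, inertia P s -> ract R s = 1%:M.

(* objects of the category defining A_p *)
Definition admissible (F : fieldType) (p : nat) (R : rep F) : Prop :=
  [/\ rep_hom R, rep_continuous R & rep_unram_outside p R].

(* simple (irreducible, nonzero) representation; a row vector u is in the
   row-space of U, and sigma sends the column vector u^T to (ract s) u^T *)
Definition rep_simple (F : fieldType) (R : rep F) : Prop :=
  (0 < rdim R)%N /\
  forall U : 'M[F]_(rdim R),
    (forall s, is_gal s -> (U *m (ract R s)^T <= U)%MS) ->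
    (\rank U == 0)%N || row_full U.

Definition rep_iso (F : fieldType) (R S : rep F) : Prop :=
  exists Q : 'M[F]_(rdim R, rdim S),
    [/\ row_free Q, row_full Q &
        forall s, is_gal s -> ract R s *m Q = Q *m ract S s].

(* a fixed primitive p-th root of unity in algC (p.-1.+1 = p for p prime) *)
Definition zeta (p : nat) : algC := sval (C_prim_root_exists (ltn0Sn p.-1)).

(* reduction mod p of the p-adic cyclotomic character: sigma(zeta) = zeta^k,
   chibar sigma = k mod p, viewed in F (of characteristic p) *)
Definition chibar (F : fieldType) (p : nat) (s : algC -> algC) : F :=
  (\sum_(k < p | s (zeta p) == zeta p ^+ k) (k : nat))%:R.

Definition twist (F : fieldType) (p : nat) (i : int) (R : rep F) : rep F :=
  @Rep F (rdim R) (fun s => (chibar F p s ^ i) *: ract R s).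

(* elements of A_p are formal Z-combinations of (classes of) simple objects;
   coefficient of the class of S in sum_k c_k [R_k] *)
Definition coef (F : fieldType) (H : seq (int * rep F)) (S : rep F) : int :=
  \sum_(x <- H) (if `[< rep_iso x.2 S >] then x.1 else 0).

Definition twistA (F : fieldType) (p : nat) (i : int) (H : seq (int * rep F)) :=
  [seq (x.1, twist p i x.2) | x <- H].

(* ||H|| = sum |n_S| dim S, for H written with pairwise non-isomorphic simples *)
Definition normA (F : fieldType) (H : seq (int * rep F)) : nat :=
  \sum_(x <- H) (`|x.1|%N * rdim x.2)%N.

Definition rep0 (F : fieldType) : int * rep F := (0, @Rep F 0 (fun _ => 0)).

Definition canonical_expr (F : fieldType) (p : nat) (H : seq (int * rep F)) : Prop :=
  (forall j, (j < size H)%N ->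
     admissible p (nth (rep0 F) H j).2 /\ rep_simple (nth (rep0 F) H j).2) /\
  (forall (j k : nat), (j < size H)%N -> (k < size H)%N -> j <> k ->
     ~ rep_iso (nth (rep0 F) H j).2 (nth (rep0 F) H k).2).

Definition annihilated (F : fieldType) (p : nat) (i : int) (H : seq (int * rep F)) : Prop :=
  forall S : rep F, admissible p S -> rep_simple S ->
    coef H S + coef (twistA p i H) S = 0.

(* Pair each simple constituent S of H with nonzero coefficient n_S with the
   unique S' such that S' (x) chibar^i is isomorphic to S; the annihilation
   hypothesis forces n_S' = -n_S, and this pairing is a permutation of the
   constituents.  Comparing the product of det(S)^|n_S| with that of
   det(S' (x) chibar^i)^|n_S'| gives chibar^(i ||H||) = 1 on the whole Galois
   group.  Since chibar takes every value in F_p^*, which is cyclic of order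
   p - 1, the exponent i ||H|| is a multiple of p - 1. *)
From HB Require Import structures.
From mathcomp Require Import all_boot all_order all_algebra all_field.
From mathcomp Require Import all_solvable boolp.
Set Implicit Arguments. Unset Strict Implicit. Unset Printing Implicit Defensive.
Import Order.TTheory GRing.Theory Num.Theory.
Local Open Scope ring_scope.

Section RepIso.
Variable F : fieldType.

Lemma row_free_full_inverse m n (Q : 'M[F]_(m, n)) : row_free Q -> row_full Q ->
  exists Q' : 'M[F]_(n, m), Q *m Q' = 1%:M /\ Q' *m Q = 1%:M.
Proof.
move=> /row_freeP [B QB] /row_fullP [C CQ].
have eBC : B = C by rewrite -[B]mul1mx -CQ -mulmxA QB mulmx1.
by exists B; rewrite {2}eBC.
Qed.

Lemma rep_iso_refl (R : rep F) : rep_iso R R.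
Proof.
exists 1%:M; split; first by apply/row_freeP; exists 1%:M; rewrite mul1mx.
  by apply/row_fullP; exists 1%:M; rewrite mul1mx.
by move=> s _; rewrite mulmx1 mul1mx.
Qed.

Lemma rep_iso_sym (R S : rep F) : rep_iso R S -> rep_iso S R.
Proof.
case=> Q [fr fu RQ]; have [B [QB BQ]] := row_free_full_inverse fr fu.
exists B; split; [by apply/row_freeP; exists Q | by apply/row_fullP; exists Q |].
move=> s gs; have := congr1 (fun M => B *m M *m B) (RQ s gs).
by rewrite !mulmxA BQ mul1mx -!mulmxA QB mulmx1 => <-.
Qed.

Lemma rep_iso_trans (R S T : rep F) : rep_iso R S -> rep_iso S T -> rep_iso R T.
Proof.
case=> Q [fr fu RQ]; case=> Q' [fr' fu' SQ'].
have [B [QB BQ]] := row_free_full_inverse fr fu.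
have [B' [QB' BQ']] := row_free_full_inverse fr' fu'.
exists (Q *m Q'); split.
- by apply/row_freeP; exists (B' *m B); rewrite -mulmxA (mulmxA Q') QB' mul1mx QB.
- by apply/row_fullP; exists (B' *m B); rewrite -mulmxA (mulmxA B) BQ mul1mx BQ'.
by move=> s gs; rewrite mulmxA RQ // -!mulmxA SQ'.
Qed.

Lemma det_intertwined m n (A : 'M[F]_m) (B : 'M[F]_n) (Q : 'M_(m, n)) (Q' : 'M_(n, m)) :
  Q *m Q' = 1%:M -> Q' *m Q = 1%:M -> A *m Q = Q *m B -> \det A = \det B.
Proof.
move=> QQ' Q'Q AQ.
have emn : m = n.
  have le_mn : (m <= n)%N.
    by rewrite -(mxrank1 F m) -QQ' (leq_trans (mxrankM_maxl _ _)) ?rank_leq_col.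
  have le_nm : (n <= m)%N.
    by rewrite -(mxrank1 F n) -Q'Q (leq_trans (mxrankM_maxl _ _)) ?rank_leq_col.
  by apply/eqP; rewrite eqn_leq le_mn le_nm.
move: Q Q' B QQ' Q'Q AQ; rewrite -emn => Q Q' B QQ' Q'Q AQ.
have [/[!unitmxE] dQ_unit _] := mulmx1_unit QQ'.
by apply: (mulIr dQ_unit); rewrite -!det_mulmx AQ !det_mulmx mulrC.
Qed.

Lemma rep_iso_det (R S : rep F) s : rep_iso R S -> is_gal s ->
  \det (ract R s) = \det (ract S s).
Proof.
case=> Q [fr fu RQ] gs; have [B [QB BQ]] := row_free_full_inverse fr fu.
exact: det_intertwined QB BQ (RQ s gs).
Qed.

End RepIso.

Lemma is_gal_exp s x n : is_gal s -> s (x ^+ n) = s x ^+ n.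
Proof.
case=> _ sM s1 _; elim: n => [|n IHn]; first by rewrite !expr0 s1.
by rewrite !exprS sM IHn.
Qed.

Lemma is_gal_inverse s : is_gal s -> exists t, is_gal t /\ s \o t = id.
Proof.
case=> sD sM s1 [t st ts]; exists t; split; last by apply: funext => x /=; rewrite ts.
split; last by exists s.
- by move=> x y; rewrite -{1}(ts x) -{1}(ts y) -sD st.
- by move=> x y; rewrite -{1}(ts x) -{1}(ts y) -sM st.
- by rewrite -s1 st.
Qed.

Lemma is_gal_rmorphism (u : {rmorphism algC -> algC}) : is_gal u.
Proof.
split; [exact: rmorphD | exact: rmorphM | exact: rmorph1 |].
by exists (algC_invaut u); [exact: algC_autK | exact: algC_invautK].
Qed.

Section Chibar.
Variables (F : fieldType) (p : nat).
Hypothesis p_gt0 : (0 < p)%N.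

Lemma zetaP : p.-primitive_root (zeta p).
Proof. by rewrite /zeta; case: C_prim_root_exists => z /=; rewrite prednK. Qed.

Lemma chibarE s (k : nat) : (k < p)%N -> s (zeta p) = zeta p ^+ k -> chibar F p s = k%:R.
Proof.
move=> lt_kp szeta; rewrite /chibar szeta.
rewrite (eq_bigl (pred1 (Ordinal lt_kp))) ?big_pred1_eq // => k' /=.
by rewrite (eq_prim_root_expr zetaP) !modn_small // eq_sym.
Qed.

Lemma chibar_nat s : (1 < p)%N -> is_gal s ->
  exists2 k : nat, (0 < k < p)%N & chibar F p s = k%:R.
Proof.
move=> p_gt1 gs; have /(prim_rootP zetaP)[k szeta] : s (zeta p) ^+ p = 1.
  by rewrite -is_gal_exp // (prim_expr_order zetaP); case: gs.
exists k; last exact: chibarE.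
rewrite ltn_ord andbT lt0n; apply/eqP => k0.
case: gs => _ _ s1 [s' ss' _].
have : zeta p ^+ 1 = zeta p ^+ 0.
  by rewrite expr1 -{1}(ss' (zeta p)) szeta k0 expr0 -s1 ss'.
by move/eqP; rewrite (eq_prim_root_expr zetaP) !modn_small.
Qed.

Lemma chibar_surj k : prime p -> (0 < k < p)%N ->
  exists2 s, is_gal s & chibar F p s = k%:R.
Proof.
move=> p_pr /andP[k_gt0 lt_kp].
have co_kp : coprime k p by rewrite coprime_sym prime_coprime // gtnNdvd.
have [u uzeta] := Qn_aut_exists co_kp.
exists u; first exact: is_gal_rmorphism.
by apply: chibarE => //; apply: uzeta; exact: prim_expr_order zetaP.
Qed.

End Chibar.

Lemma natr_pchar_neq0 (F : fieldType) p k : p \in [pchar F] -> (0 < k < p)%N ->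
  k%:R != 0 :> F.
Proof. by move=> charFp /andP[k_gt0 lt_kp]; rewrite -(dvdn_pcharf charFp) gtnNdvd. Qed.

Lemma chibar_neq0 (F : fieldType) p s : p \in [pchar F] -> is_gal s -> chibar F p s != 0.
Proof.
move=> charFp gs; have p_gt1 := prime_gt1 (pcharf_prime charFp).
have [k lt_kp ->] := chibar_nat F (ltnW p_gt1) p_gt1 gs.
exact: natr_pchar_neq0 charFp lt_kp.
Qed.

Lemma pchar_natr_exp_eq1_dvd (F : fieldType) p e : p \in [pchar F] ->
  (forall k, (0 < k < p)%N -> (k%:R : F) ^+ e = 1) -> (p.-1 %| e)%N.
Proof.
move=> charFp ke1; have p_gt1 := prime_gt1 (pcharf_prime charFp).
have p1_gt0 : (0 < p.-1)%N by rewrite -ltnS prednK // ltnW.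
have mem_iota1 k : (k \in iota 1 p.-1) = (0 < k < p)%N.
  by rewrite mem_iota add1n prednK // ltnW.
have fermat k : (0 < k < p)%N -> (k%:R : F) ^+ p.-1 = 1.
  move=> kP; apply: (mulIf (natr_pchar_neq0 charFp kP)).
  by rewrite mul1r -exprSr prednK ?(ltnW p_gt1) // -pFrobenius_autE pFrobenius_aut_nat.
have natr_inj : {in iota 1 p.-1 &, injective (fun k => k%:R : F)}.
  move=> a b; rewrite !mem_iota1 => aP bP eab; apply/eqP.
  wlog le_ab : a b aP bP eab / (a <= b)%N.
    by move=> W; case/orP: (leq_total a b) => ?; last rewrite eq_sym; apply: W.
  have : (p %| b - a)%N by rewrite (dvdn_pcharf charFp) natrB // eab subrr.
  rewrite eqn_leq le_ab -subn_eq0; apply: contraLR; rewrite -lt0n => ba_gt0.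
  by rewrite gtnNdvd // (leq_ltn_trans (leq_subr _ _)) //; case/andP: bP.
have /hasP[_ /mapP[k kP ->] prim_k] :
    has p.-1.-primitive_root [seq k%:R : F | k <- iota 1 p.-1].
  apply: has_prim_root; rewrite ?size_map ?size_iota //.
    by apply/allP => _ /mapP[k kP ->]; rewrite unity_rootE fermat -?mem_iota1.
  by rewrite map_inj_in_uniq ?iota_uniq.
by rewrite (prim_order_dvd prim_k) ke1 // -mem_iota1.
Qed.

Lemma expz_exprn_eq1 (R : unitRingType) (x : R) (z : int) m :
  (x ^ z) ^+ m = 1 -> x ^+ (`|z| * m) = 1.
Proof.
case: z => k /=; first by rewrite exprM.
by rewrite exprVn -exprM => /eqP; rewrite invr_eq1 => /eqP.
Qed.

Lemma det_ract_neq0 (F : fieldType) (R : rep F) s : rep_hom R -> is_gal s ->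
  \det (ract R s) != 0.
Proof.
case=> R1 RM gs; have [t [gt st]] := is_gal_inverse gs.
have := congr1 determinant (RM s t gs gt); rewrite st R1 det1 det_mulmx.
by apply: contra_eq_neq => ->; rewrite mul0r oner_neq0.
Qed.

Section Twist.
Variables (F : fieldType) (p : nat).

Lemma twist_iso (i : int) (R S : rep F) : rep_iso R S -> rep_iso (twist p i R) (twist p i S).
Proof.
by case=> Q [fr fu RQ]; exists Q; split=> // s gs /=; rewrite -scalemxAl RQ ?scalemxAr.
Qed.

Lemma det_twist (i : int) (R : rep F) s :
  \det (ract (twist p i R) s) = (chibar F p s ^ i) ^+ rdim R * \det (ract R s).
Proof. exact: detZ. Qed.

Hypothesis chibar_nz : forall s, is_gal s -> chibar F p s != 0.
Variable i : int.

Lemma twist_untwist (R : rep F) : rep_iso (twist p (- i) (twist p i R)) R.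
Proof.
exists 1%:M; split; [by apply/row_freeP; exists 1%:M; rewrite mul1mx
  | by apply/row_fullP; exists 1%:M; rewrite mul1mx |].
move=> s gs /=; rewrite scalerA -invr_expz mulVf ?scale1r ?mulmx1 ?mul1mx //.
exact: expfz_neq0 (chibar_nz gs).
Qed.

Lemma twist_iso_cancel (R S : rep F) :
  rep_iso (twist p i R) (twist p i S) -> rep_iso R S.
Proof.
move=> /(twist_iso (- i)) RS; apply: rep_iso_trans (rep_iso_sym (twist_untwist R)) _.
exact: rep_iso_trans RS (twist_untwist S).
Qed.

End Twist.

Section Pairing.
Variables (F : fieldType) (p : nat) (i : int) (H : seq (int * rep F)).
Hypotheses (canH : canonical_expr p H) (annH : annihilated p i H).
Hypothesis chibar_nz : forall s, is_gal s -> chibar F p s != 0.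

Let N := size H.
Let S (j : 'I_N) := (nth (rep0 F) H j).2.
Let n (j : 'I_N) := (nth (rep0 F) H j).1.

Lemma constituents_not_iso j k : j != k -> ~ rep_iso (S j) (S k).
Proof. by move=> /eqP neq_jk; apply: canH.2 => // /val_inj. Qed.

Lemma coef_constituent j : coef H (S j) = n j.
Proof.
rewrite /coef (big_nth (rep0 F)) big_mkord (bigD1 j) //= (asboolT (rep_iso_refl _)).
by rewrite big1 ?addr0 // => k neq_kj; rewrite asboolF //; exact: constituents_not_iso.
Qed.

Lemma annihilated_constituent j :
  n j + \sum_(k < N) (if `[< rep_iso (twist p i (S k)) (S j) >] then n k else 0) = 0.
Proof.
have [admS simS] := canH.1 j (ltn_ord j).
have := annH admS simS.
by rewrite coef_constituent /coef big_map (big_nth (rep0 F)) big_mkord.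
Qed.

Lemma twist_constituent_uniq j k k' : rep_iso (twist p i (S k)) (S j) ->
  rep_iso (twist p i (S k')) (S j) -> k = k'.
Proof.
move=> kj k'j; apply: contraPeq (@constituents_not_iso k k') _.
exact: (twist_iso_cancel chibar_nz (rep_iso_trans kj (rep_iso_sym k'j))).
Qed.

Definition partner (j : 'I_N) : 'I_N :=
  if n j == 0 then j else odflt j [pick k | `[< rep_iso (twist p i (S k)) (S j) >]].

Lemma partner_id j : n j = 0 -> partner j = j.
Proof. by rewrite /partner => ->; rewrite eqxx. Qed.

Lemma partnerP j : n j != 0 ->
  rep_iso (twist p i (S (partner j))) (S j) /\ n (partner j) = - n j.
Proof.
move=> nj_neq0; have := annihilated_constituent j.
rewrite /partner (negPf nj_neq0); case: pickP => [k /asboolP kj | no_k] /=.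
  rewrite (bigD1 k) /= ?(asboolT kj) // big1 ?addr0 => [nj_nk | k' neq_k'k].
    by split=> //; apply/eqP; rewrite -addr_eq0 addrC nj_nk.
  by case: asboolP => // k'j; case/eqP: neq_k'k; apply: twist_constituent_uniq k'j kj.
rewrite big1 ?addr0 => [nj0 | k _]; last by rewrite no_k.
by rewrite nj0 eqxx in nj_neq0.
Qed.

Lemma partner_inj : injective partner.
Proof.
have partner_neq0 j : n j != 0 -> n (partner j) != 0.
  by move=> nj_neq0; rewrite (partnerP nj_neq0).2 oppr_eq0.
move=> j1 j2 eq_p12.
have [nj1_0 | nj1_neq0] := eqVneq (n j1) 0; have [nj2_0 | nj2_neq0] := eqVneq (n j2) 0.
- by rewrite -(partner_id nj1_0) eq_p12 partner_id.
- by move: (partner_neq0 _ nj2_neq0); rewrite -eq_p12 partner_id ?nj1_0 ?eqxx.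
- by move: (partner_neq0 _ nj1_neq0); rewrite eq_p12 partner_id ?nj2_0 ?eqxx.
apply: contraPeq (@constituents_not_iso j1 j2) _.
have [iso1 _] := partnerP nj1_neq0; have [iso2 _] := partnerP nj2_neq0.
by rewrite eq_p12 in iso1; exact: rep_iso_trans (rep_iso_sym iso1) iso2.
Qed.

Lemma chibar_expz_normA s : is_gal s -> (chibar F p s ^ i) ^+ normA H = 1.
Proof.
move=> gs; set c := chibar F p s ^ i.
pose D j := \det (ract (S j) s) ^+ `|n j|.
pose w j := (`|n j| * rdim (S j))%N.
have D_partner j : D j = c ^+ w (partner j) * D (partner j).
  have [nj0 | nj_neq0] := eqVneq (n j) 0.
    by rewrite /D /w partner_id // nj0 mul0n !expr0 mul1r.
  have [iso_j n_partner] := partnerP nj_neq0.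
  by rewrite /D /w -(rep_iso_det iso_j gs) det_twist exprMn -exprM mulnC n_partner abszN.
have prodD_neq0 : \prod_j D j != 0.
  apply/prodf_neq0 => j _; rewrite expf_neq0 // det_ract_neq0 //.
  by case: (canH.1 j (ltn_ord j)) => -[].
have normAE : normA H = \sum_j w j by rewrite /normA (big_nth (rep0 F)) big_mkord.
have sum_w : \sum_j w (partner j) = \sum_j w j.
  by apply: esym; exact: reindex_inj partner_inj.
have prod_D : \prod_j D (partner j) = \prod_j D j.
  by apply: esym; exact: reindex_inj partner_inj.
have : \prod_j D j = c ^+ normA H * \prod_j D j.
  by rewrite {1}(eq_bigr _ (fun j _ => D_partner j)) big_split /= prodrXr sum_w prod_D normAE.
by move=> eqD; apply: (mulIf prodD_neq0); rewrite mul1r -eqD.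
Qed.

End Pairing.

Theorem mainTheorem3 (F : finFieldType) (p : nat) (hp : prime p)
  (hchar : p \in [pchar F]) (i : int) (H : seq (int * rep F))
  (hH : canonical_expr p H) (hann : annihilated p i H) :
  ((p%:Z - 1) %| i * (normA H)%:Z)%Z.
Proof.
have chibar_nz s : is_gal s -> chibar F p s != 0 by apply: chibar_neq0.
have natr_exp_eq1 k : (0 < k < p)%N -> (k%:R : F) ^+ (`|i| * normA H) = 1.
  move=> kP; have [s gs <-] := chibar_surj F (prime_gt0 hp) hp kP.
  exact/expz_exprn_eq1/(chibar_expz_normA hH hann chibar_nz).
have := pchar_natr_exp_eq1_dvd hchar natr_exp_eq1.
by rewrite dvdzE abszM absz_nat -predn_int ?prime_gt0.
Qed.
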